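(* Let $V:[0,\infty)\to\mathbb{R}$ be càdlàg with finite variation on compact intervals. Let $t>0$, and let $x$ be a simple level for $V$ with $x\neq V(0)$ and $x\neq V(t)$. Then the sets $(0,t]\cap\mathcal{I}(x)$ and $(0,t]\cap\mathcal{D}(x)$ are finite. The sum below has only finitely many nonzero terms, and $$\mathbf{1}_{[x,\infty)}(V(t))=\mathbf{1}_{[x,\infty)}(V(0))+\ell^x(t)+\sum_{0<s\le t}\Big(\mathbf{1}_{[x,\infty)}(V(s))-\mathbf{1}_{[x,\infty)}(V(s-))\Big).$$
   Context: $V(s-)$ is the left limit and $\Delta V(s)=V(s)-V(s-)$. A level $x\in\mathbb{R}$ is simple for $V$ if two conditions hold. First, the set $\{t>0: V(t-)<x<V(t)\text{ or }V(t)<x<V(t-)\text{ or }V(t)=x\}$ is discrete. Second, there is no $t>0$ with $\Delta V(t)\ne0$ and $x\in\{V(t),V(t-)\}$. We write $t\in\mathcal{I}(x)$ (i.e. $V$ increases through level $x$ at time $t$) if two conditions hold. First, $V(t)=x$ and $V$ is continuous at $t$. Second, there is $\delta>0$ such that for all $s\ge0$ with $0<|s-t|<\delta$, $V(s)-V(t)$ has the same strict sign as $s-t$. We write $t\in\mathcal{D}(x)$ (i.e. $V$ decreases through level $x$ at time $t$) if $-V$ increases through $-x$ at time $t$. Finally $\ell^x(t)=\mathrm{Card}((0,t]\cap\mathcal{I}(x))-\mathrm{Card}((0,t]\cap\mathcal{D}(x))$. *)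

From Stdlib Require Import Reals Lra List Sorting.Sorted.
Import ListNotations.
Open Scope R_scope.

Definition right_cont (V : R -> R) (s : R) : Prop :=
  forall eps, eps > 0 -> exists delta, delta > 0 /\
    forall u, s <= u < s + delta -> Rabs (V u - V s) < eps.

Definition is_left_limit (V : R -> R) (s l : R) : Prop :=
  forall eps, eps > 0 -> exists delta, delta > 0 /\
    forall u, s - delta < u < s -> Rabs (V u - l) < eps.

Definition cadlag (V : R -> R) : Prop :=
  (forall s, 0 <= s -> right_cont V s) /\
  (forall s, 0 < s -> exists l, is_left_limit V s l).

Fixpoint variation (V : R -> R) (l : list R) : R :=
  match l with
  | a :: ((b :: _) as l') => Rabs (V b - V a) + variation V l'
  | _ => 0
  end.

Definition finite_variation (V : R -> R) : Prop :=
  forall T, 0 <= T -> exists M, forall l : list R,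
    Sorted Rle l -> (forall u, In u l -> 0 <= u <= T) -> variation V l <= M.

Definition cont_at (V : R -> R) (t : R) : Prop :=
  forall eps, eps > 0 -> exists delta, delta > 0 /\
    forall s, 0 <= s -> Rabs (s - t) < delta -> Rabs (V s - V t) < eps.

(* x is a simple level for V; Vm s stands for V(s-). *)
Definition crossing_set (V Vm : R -> R) (x t : R) : Prop :=
  0 < t /\ ((Vm t < x < V t) \/ (V t < x < Vm t) \/ V t = x).

Definition simple_level (V Vm : R -> R) (x : R) : Prop :=
  (forall t, crossing_set V Vm x t ->
     exists delta, delta > 0 /\
       forall s, crossing_set V Vm x s -> s <> t -> delta <= Rabs (s - t)) /\
  (forall t, 0 < t -> V t - Vm t <> 0 -> x <> V t /\ x <> Vm t).

Definition incr_through (V : R -> R) (x t : R) : Prop :=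
  V t = x /\ cont_at V t /\
  exists delta, delta > 0 /\
    forall s, 0 <= s -> 0 < Rabs (s - t) < delta ->
      (s < t -> V s - V t < 0) /\ (s > t -> V s - V t > 0).

Definition decr_through (V : R -> R) (x t : R) : Prop :=
  incr_through (fun s => - V s) (- x) t.

Definition ind_ge (x y : R) : R := if Rle_dec x y then 1 else 0.

Fixpoint sum_list (f : R -> R) (l : list R) : R :=
  match l with
  | [] => 0
  | a :: l' => f a + sum_list f l'
  end.

(* Call s a crossing time of level x if V jumps strictly across x at s or
   V(s) = x.  Because x is simple, crossing times are isolated, and they do not
   accumulate anywhere in [0, oo) either: an accumulation point m from the right
   would force V(m) = x, one from the left would force V(m-) = x and then, by
   the second condition on simple levels, V(m) = x — in both cases m would be a
   non-isolated crossing (or m = 0 with V(0) = x, which is excluded).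
   Between two consecutive crossing times V stays on one side of x (a sign
   persistence argument), and at a crossing time c the indicator
   1_[x,oo)(V) changes by exactly 1_{I(x)}(c) - 1_{D(x)}(c) + (jump of the
   indicator at c).  A real induction on [0, t] then yields a finite
   duplicate-free list of the crossing times in (0, t] along which the formula
   holds; the sets (0,t] ∩ I(x), (0,t] ∩ D(x) and the nonzero jump terms are
   sublists of it. *)

From Stdlib Require Import Reals Lra List Permutation Classical ClassicalEpsilon.
Import ListNotations.
Open Scope R_scope.

Ltac solve_abs :=
  unfold Rabs in *;
  repeat match goal with
  | H : context [Rcase_abs ?a] |- _ => destruct (Rcase_abs a)
  | |- context [Rcase_abs ?a] => destruct (Rcase_abs a)
  end; lra.

Lemma real_induction (a b : R) (P : R -> Prop) :
  a <= b ->
  (forall m, a <= m <= b -> (forall u, a <= u < m -> P u) -> P m) ->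
  (forall m, a <= m < b -> (forall u, a <= u <= m -> P u) ->
     exists w, m < w /\ forall u, m < u < w -> P u) ->
  forall u, a <= u <= b -> P u.
Proof.
  intros hab hclosed hopen.
  set (E := fun s => a <= s <= b /\ forall u, a <= u <= s -> P u).
  assert (hbound : bound E) by (exists b; intros s [hs _]; lra).
  assert (haE : E a).
  { split; [lra|]. intros u hu. apply hclosed; [lra|]. intros v hv; lra. }
  destruct (completeness E hbound (ex_intro _ a haE)) as [m [hub hlub]].
  assert (ham : a <= m) by (apply hub; exact haE).
  assert (hmb : m <= b) by (apply hlub; intros s [hs _]; lra).
  assert (hbelow : forall u, a <= u < m -> P u).
  { intros u hu. apply NNPP; intros hPu.
    assert (m <= u); [|lra].
    apply hlub. intros s [hs hPs]. destruct (Rle_lt_dec s u) as [|hus]; [assumption|].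
    exfalso; apply hPu, hPs; lra. }
  assert (hupto : forall u, a <= u <= m -> P u).
  { intros u hu. destruct (Req_dec u m) as [->|hne]; [apply hclosed; auto; lra|].
    apply hbelow; lra. }
  destruct (Rlt_or_le m b) as [hmb'|hmb']; [|intros u hu; apply hupto; lra].
  destruct (hopen m ltac:(lra) hupto) as [w [hw hPw]].
  assert (hm'1 := Rmin_l b ((m + w) / 2)). assert (hm'2 := Rmin_r b ((m + w) / 2)).
  assert (hm'3 : m < Rmin b ((m + w) / 2)) by (apply Rmin_glb_lt; lra).
  set (m' := Rmin b ((m + w) / 2)) in *.
  assert (hm' : E m').
  { split; [lra|]. intros u hu.
    destruct (Rle_or_lt u m); [apply hupto; lra|apply hPw; lra]. }
  assert (m' <= m) by (apply hub; exact hm'). lra.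
Qed.

Lemma same_side (u w x : R) : Rabs (u - w) < Rabs (w - x) -> (u - x) * (w - x) > 0.
Proof. intros h. unfold Rabs in h; destruct (Rcase_abs (u - w)), (Rcase_abs (w - x)); nra. Qed.

Lemma sign_transfer (p q k : R) : p * q > 0 -> q * k > 0 -> p * k > 0.
Proof. intros hpq hqk. nra. Qed.

Lemma ind_ge_same_side (x u w : R) : (u - x) * (w - x) > 0 -> ind_ge x u = ind_ge x w.
Proof. intros h. unfold ind_ge. destruct (Rle_dec x u), (Rle_dec x w); auto; exfalso; nra. Qed.

Lemma limit_equals_level (f : R -> R) (near : R -> R -> Prop) (l x : R) :
  (forall eps, eps > 0 -> exists d, d > 0 /\ forall u, near d u -> Rabs (f u - l) < eps) ->
  (forall d eps, d > 0 -> eps > 0 ->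
     exists u1 u2, near d u1 /\ near d u2 /\ f u1 < x + eps /\ f u2 > x - eps) ->
  l = x.
Proof.
  intros hlim hclose.
  destruct (Rtotal_order l x) as [hlt|[heq|hgt]]; [exfalso|exact heq|exfalso].
  - destruct (hlim ((x - l) / 2) ltac:(lra)) as [d [hd hnear]].
    destruct (hclose d ((x - l) / 2) hd ltac:(lra)) as [_ [u [_ [hu [_ hfu]]]]].
    specialize (hnear u hu). solve_abs.
  - destruct (hlim ((l - x) / 2) ltac:(lra)) as [d [hd hnear]].
    destruct (hclose d ((l - x) / 2) hd ltac:(lra)) as [u [_ [hu [_ [hfu _]]]]].
    specialize (hnear u hu). solve_abs.
Qed.

Lemma left_limit_side (f : R -> R) (a c l x k : R) : a < c -> is_left_limit f c l ->
  (forall s, a <= s < c -> (f s - x) * k > 0) -> (l - x) * k >= 0.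
Proof.
  intros hac hlim hside. apply Rnot_lt_ge; intros hneg.
  assert (hlx : Rabs (l - x) > 0) by (apply Rabs_pos_lt; intros e; rewrite e in hneg; lra).
  destruct (hlim _ hlx) as [d [hd hnear]].
  assert (hs1 := Rmax_l a (c - d / 2)). assert (hs2 := Rmax_r a (c - d / 2)).
  assert (hs3 : Rmax a (c - d / 2) < c) by (apply Rmax_lub_lt; lra).
  set (s := Rmax a (c - d / 2)) in *.
  assert (hfl := same_side _ _ _ (hnear s ltac:(lra))).
  assert (hfk := hside s ltac:(lra)). nra.
Qed.

Lemma right_cont_side (f : R -> R) (m x k : R) : right_cont f m -> (f m - x) * k > 0 ->
  exists d, d > 0 /\ forall u, m <= u < m + d -> (f u - x) * k > 0.
Proof.
  intros hrc hm.
  assert (hmx : Rabs (f m - x) > 0) by (apply Rabs_pos_lt; intros e; rewrite e in hm; lra).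
  destruct (hrc _ hmx) as [d [hd hnear]]. exists d; split; [exact hd|].
  intros u hu. exact (sign_transfer _ _ _ (same_side _ _ _ (hnear u hu)) hm).
Qed.

Lemma cont_at_of_limits (f : R -> R) (c : R) :
  right_cont f c -> is_left_limit f c (f c) -> cont_at f c.
Proof.
  intros hr hl eps heps.
  destruct (hr eps heps) as [d1 [hd1 h1]]. destruct (hl eps heps) as [d2 [hd2 h2]].
  assert (m1 := Rmin_l d1 d2). assert (m2 := Rmin_r d1 d2).
  exists (Rmin d1 d2). split; [apply Rmin_glb_lt; lra|]. intros s _ hsc.
  destruct (Rle_or_lt c s); [apply h1|apply h2]; solve_abs.
Qed.

Lemma cont_at_opp (f : R -> R) (c : R) : cont_at f c -> cont_at (fun s => - f s) c.
Proof.
  intros hc eps heps. destruct (hc eps heps) as [d [hd hnear]]. exists d; split; [exact hd|].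
  intros s hs hsc. replace (- f s - - f c) with (- (f s - f c)) by ring.
  rewrite Rabs_Ropp. auto.
Qed.

Lemma incr_through_sides (W : R -> R) (y a c b : R) :
  0 <= a < c -> c < b -> W c = y -> cont_at W c ->
  (forall s, a <= s < c -> (W s - y) * (W a - y) > 0) ->
  (forall s, c < s <= b -> (W s - y) * (W b - y) > 0) ->
  (incr_through W y c <-> W a < y < W b).
Proof.
  intros hac hcb hWc hcont hleft hright. split.
  - intros [_ [_ [d [hd hnear]]]].
    assert (h1 := Rmax_l a (c - d / 2)). assert (h2 := Rmax_r a (c - d / 2)).
    assert (h3 : Rmax a (c - d / 2) < c) by (apply Rmax_lub_lt; lra).
    assert (h4 := Rmin_l b (c + d / 2)). assert (h5 := Rmin_r b (c + d / 2)).
    assert (h6 : c < Rmin b (c + d / 2)) by (apply Rmin_glb_lt; lra).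
    set (s1 := Rmax a (c - d / 2)) in *. set (s2 := Rmin b (c + d / 2)) in *.
    destruct (hnear s1 ltac:(lra) ltac:(solve_abs)) as [hs1 _].
    destruct (hnear s2 ltac:(lra) ltac:(solve_abs)) as [_ hs2].
    specialize (hs1 h3). specialize (hs2 h6).
    assert (hl := hleft s1 ltac:(lra)). assert (hr := hright s2 ltac:(lra)).
    split; nra.
  - intros [ha hb]. split; [exact hWc|split; [exact hcont|]].
    assert (m1 := Rmin_l (c - a) (b - c)). assert (m2 := Rmin_r (c - a) (b - c)).
    exists (Rmin (c - a) (b - c)). split; [apply Rmin_glb_lt; lra|].
    intros s _ hs. split; intros hsc.
    + assert (hl := hleft s ltac:(solve_abs)). nra.
    + assert (hr := hright s ltac:(solve_abs)). nra.
Qed.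

Lemma sum_list_perm (f : R -> R) (l1 l2 : list R) :
  Permutation l1 l2 -> sum_list f l1 = sum_list f l2.
Proof. induction 1; simpl; lra. Qed.

Lemma sum_list_drop_zeros (g : R -> R) (l : list R) :
  sum_list g l = sum_list g (filter (fun s => if Req_EM_T (g s) 0 then false else true) l).
Proof. induction l as [|a l IH]; simpl; auto. destruct (Req_EM_T (g a) 0); simpl; lra. Qed.

Lemma sum_list_same_support (g : R -> R) (l1 l2 : list R) : NoDup l1 -> NoDup l2 ->
  (forall s, g s <> 0 -> (In s l1 <-> In s l2)) -> sum_list g l1 = sum_list g l2.
Proof.
  intros h1 h2 hsupp. rewrite (sum_list_drop_zeros g l1), (sum_list_drop_zeros g l2).
  apply sum_list_perm, NoDup_Permutation; try apply NoDup_filter; auto.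
  intros s. rewrite !filter_In. destruct (Req_EM_T (g s) 0) as [|hne].
  - split; intros [_ H]; discriminate.
  - rewrite hsupp by exact hne. tauto.
Qed.

Definition indP (P : Prop) : R := if excluded_middle_informative P then 1 else 0.

Lemma indP_false (P : Prop) : ~ P -> indP P = 0.
Proof. intros h. unfold indP. destruct (excluded_middle_informative P); tauto. Qed.

Lemma count_sublist (P : R -> Prop) (L : list R) : NoDup L ->
  exists l, NoDup l /\ (forall s, In s l <-> In s L /\ P s) /\
    sum_list (fun s => indP (P s)) L = INR (length l).
Proof.
  intros hnd.
  set (p := fun s => if excluded_middle_informative (P s) then true else false).
  exists (filter p L). split; [apply NoDup_filter; exact hnd|split].
  - intros s. rewrite filter_In. unfold p.
    destruct (excluded_middle_informative (P s)); intuition discriminate.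
  - clear hnd. induction L as [|a L IH]; simpl; [reflexivity|].
    unfold indP at 1, p at 1.
    destruct (excluded_middle_informative (P a)); simpl length; rewrite IH;
      [rewrite S_INR|]; lra.
Qed.

Section Crossings.

Variables (V Vm : R -> R) (x : R).
Hypothesis hrc : forall s, 0 <= s -> right_cont V s.
Hypothesis hVm : forall s, 0 < s -> is_left_limit V s (Vm s).
Hypothesis hsimple : simple_level V Vm x.
Hypothesis hx0 : x <> V 0.

Lemma no_crossing_same_side (s : R) : 0 < s -> ~ crossing_set V Vm x s ->
  (Vm s - x) * (V s - x) > 0.
Proof.
  intros hs hnc. destruct hsimple as [_ hjump].
  assert (hVs : V s <> x) by (intros e; apply hnc; split; [exact hs|tauto]).
  assert (hVms : Vm s <> x).
  { intros e. destruct (hjump s hs) as [_ h]; [lra|]. auto. }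
  destruct (Rtotal_order (V s) x) as [h1|[h1|h1]]; [|contradiction|];
  destruct (Rtotal_order (Vm s) x) as [h2|[h2|h2]]; try contradiction;
  first [nra | exfalso; apply hnc; split; [exact hs|first [left; lra | right; left; lra]]].
Qed.

Lemma jump_is_crossing (s : R) : 0 < s ->
  ind_ge x (V s) - ind_ge x (Vm s) <> 0 -> crossing_set V Vm x s.
Proof.
  intros hs hj. apply NNPP; intros hnc.
  apply hj. rewrite (ind_ge_same_side x (V s) (Vm s)); [ring|].
  assert (h := no_crossing_same_side s hs hnc). nra.
Qed.

Lemma side_persists (a b : R) : 0 <= a <= b -> V a <> x ->
  (forall s, crossing_set V Vm x s -> a < s <= b -> False) ->
  forall u, a <= u <= b -> (V u - x) * (V a - x) > 0.
Proof.
  intros hab hVa hnc.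
  apply (real_induction a b (fun u => (V u - x) * (V a - x) > 0)); [lra| |].
  - intros m hm hbelow. destruct (Req_dec m a) as [->|hne].
    { assert (V a - x <> 0) by lra. nra. }
    assert (hlim := left_limit_side V a m (Vm m) x (V a - x) ltac:(lra)
                      (hVm m ltac:(lra)) hbelow).
    assert (hm' := no_crossing_same_side m ltac:(lra) (fun hc => hnc m hc ltac:(lra))).
    assert (hVmx : Vm m - x <> 0) by (intros e; rewrite e in hm'; lra).
    assert (hVax : V a - x <> 0) by lra.
    assert ((Vm m - x) * (V a - x) <> 0) by (apply Rmult_integral_contrapositive; auto).
    nra.
  - intros m hm hupto.
    destruct (right_cont_side V m x (V a - x) (hrc m ltac:(lra)) (hupto m ltac:(lra)))
      as [d [hd hnear]].
    exists (m + d). split; [lra|]. intros u hu. apply hnear; lra.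
Qed.

Lemma crossing_near (c lo eps : R) : crossing_set V Vm x c -> lo < c -> eps > 0 ->
  exists u1 u2, lo < u1 <= c /\ lo < u2 <= c /\ V u1 < x + eps /\ V u2 > x - eps.
Proof.
  intros [hc0 hc] hlo heps.
  destruct (hVm c hc0 eps heps) as [d [hd hnear]].
  set (u := (Rmax lo (c - d) + c) / 2).
  assert (h1 := Rmax_l lo (c - d)). assert (h2 := Rmax_r lo (c - d)).
  assert (h3 : Rmax lo (c - d) < c) by (apply Rmax_lub_lt; lra).
  specialize (hnear u ltac:(unfold u; lra)).
  destruct hc as [hc|[hc|hc]].
  - exists u, c. unfold u in *. repeat split; solve_abs.
  - exists c, u. unfold u in *. repeat split; solve_abs.
  - exists c, c. repeat split; lra.
Qed.

Lemma accumulation_right (m : R) : 0 <= m ->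
  (forall w, m < w -> exists s, crossing_set V Vm x s /\ m < s < w) -> V m = x.
Proof.
  intros hm hacc.
  apply (limit_equals_level V (fun d u => m <= u < m + d) (V m) x (hrc m hm)).
  intros d eps hd heps. destruct (hacc (m + d) ltac:(lra)) as [s [hs hms]].
  destruct (crossing_near s m eps hs ltac:(lra) heps) as [u1 [u2 [h1 [h2 [h3 h4]]]]].
  exists u1, u2. repeat split; lra.
Qed.

Lemma accumulation_left (m : R) : 0 < m ->
  (forall v, v < m -> exists s, crossing_set V Vm x s /\ v < s < m) -> Vm m = x.
Proof.
  intros hm hacc.
  apply (limit_equals_level V (fun d u => m - d < u < m) (Vm m) x (hVm m hm)).
  intros d eps hd heps. destruct (hacc (m - d) ltac:(lra)) as [s [hs hms]].
  destruct (crossing_near s (m - d) eps hs ltac:(lra) heps) as [u1 [u2 [h1 [h2 [h3 h4]]]]].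
  exists u1, u2. repeat split; lra.
Qed.

Lemma no_crossings_right (m : R) : 0 <= m ->
  exists w, m < w /\ forall s, crossing_set V Vm x s -> m < s < w -> False.
Proof.
  intros hm. destruct hsimple as [hiso _].
  destruct (classic (crossing_set V Vm x m)) as [hc|hnc].
  - destruct (hiso m hc) as [d [hd hsep]]. exists (m + d). split; [lra|].
    intros s hs hms. specialize (hsep s hs ltac:(lra)). solve_abs.
  - apply NNPP; intros hnone.
    assert (hVx : V m = x).
    { apply accumulation_right; [exact hm|]. intros w hw.
      apply NNPP; intros hno. apply hnone. exists w. split; [exact hw|].
      intros s hs hms. apply hno. exists s; auto. }
    destruct (Req_dec m 0) as [->|hne]; [auto|].
    apply hnc. split; [lra|]. right; right; exact hVx.
Qed.

Lemma no_crossings_left (m : R) : 0 < m ->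
  exists v, 0 <= v < m /\ V v <> x /\ forall s, crossing_set V Vm x s -> v < s < m -> False.
Proof.
  intros hm. destruct hsimple as [hiso hjump].
  assert (hv0 : exists v0, v0 < m /\ forall s, crossing_set V Vm x s -> v0 < s < m -> False).
  { destruct (classic (crossing_set V Vm x m)) as [hc|hnc].
    - destruct (hiso m hc) as [d [hd hsep]]. exists (m - d). split; [lra|].
      intros s hs hsm. specialize (hsep s hs ltac:(lra)). solve_abs.
    - apply NNPP; intros hnone.
      assert (hVmx : Vm m = x).
      { apply accumulation_left; [exact hm|]. intros v hv.
        apply NNPP; intros hno. apply hnone. exists v. split; [exact hv|].
        intros s hs hsv. apply hno. exists s; auto. }
      apply hnc. split; [exact hm|]. right; right.
      destruct (Req_dec (V m - Vm m) 0) as [e|ne]; [lra|].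
      destruct (hjump m hm ne); lra. }
  destruct hv0 as [v0 [hv0 hfree]].
  set (v := (Rmax 0 v0 + m) / 2).
  assert (h1 := Rmax_l 0 v0). assert (h2 := Rmax_r 0 v0).
  assert (h3 : Rmax 0 v0 < m) by (apply Rmax_lub_lt; lra).
  exists v. unfold v in *. split; [lra|split].
  - intros e. apply (hfree v); [|unfold v; lra]. split; [unfold v; lra|]. right; right; exact e.
  - intros s hs hsv. apply (hfree s hs). lra.
Qed.

Lemma crossing_window (m : R) : 0 <= m ->
  exists a w, 0 <= a <= m /\ m < w /\ V a <> x /\ (0 < m -> a < m) /\
    forall s, crossing_set V Vm x s -> a < s < w -> s = m.
Proof.
  intros hm. destruct (no_crossings_right m hm) as [w [hw hright]].
  destruct (Req_dec m 0) as [->|hne].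
  - exists 0, w. repeat split; try lra; auto.
    intros s hs hsw. exfalso. apply (hright s hs). lra.
  - destruct (no_crossings_left m ltac:(lra)) as [a [ha [hVa hleft]]].
    exists a, w. repeat split; try lra; auto.
    intros s hs hsw. destruct (Rtotal_order s m) as [h|[h|h]]; [exfalso|exact h|exfalso].
    + apply (hleft s hs). lra.
    + apply (hright s hs). lra.
Qed.

(* The change of 1_[x,oo)(V) at a time s: the up/down-crossing count plus the
   jump of the indicator. *)
Definition crossing_contribution (s : R) : R :=
  indP (incr_through V x s) - indP (decr_through V x s)
  + (ind_ge x (V s) - ind_ge x (Vm s)).

Lemma continuous_crossing (a c b : R) : 0 <= a < c -> c < b -> V c = x ->
  (forall s, a <= s < c -> (V s - x) * (V a - x) > 0) ->
  (forall s, c < s <= b -> (V s - x) * (V b - x) > 0) ->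
  ind_ge x (V b) = ind_ge x (V a) + crossing_contribution c.
Proof.
  intros hac hcb hVc hleft hright. destruct hsimple as [_ hjump].
  assert (hVmc : Vm c = V c).
  { destruct (Req_dec (V c - Vm c) 0) as [e|ne]; [lra|]. destruct (hjump c ltac:(lra) ne); lra. }
  assert (hcont : cont_at V c).
  { apply cont_at_of_limits; [apply hrc; lra|]. rewrite <- hVmc. apply hVm; lra. }
  assert (hincr := incr_through_sides V x a c b hac hcb hVc hcont hleft hright).
  assert (hdecr : decr_through V x c <-> - V a < - x < - V b).
  { apply (incr_through_sides (fun s => - V s)); try lra; [apply cont_at_opp; exact hcont| |].
    - intros s hs. replace ((- V s - - x) * (- V a - - x)) with ((V s - x) * (V a - x)) by ring.
      exact (hleft s hs).
    - intros s hs. replace ((- V s - - x) * (- V b - - x)) with ((V s - x) * (V b - x)) by ring.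
      exact (hright s hs). }
  assert (hVa := hleft a ltac:(lra)). assert (hVb := hright b ltac:(lra)).
  unfold crossing_contribution, indP. rewrite hVmc.
  destruct (excluded_middle_informative (incr_through V x c)) as [i|i];
  destruct (excluded_middle_informative (decr_through V x c)) as [d|d];
  rewrite hincr in i; rewrite hdecr in d;
  unfold ind_ge; destruct (Rle_dec x (V a)), (Rle_dec x (V b)); nra.
Qed.

Lemma jump_crossing (a c b : R) : 0 <= a < c -> c <= b -> V c <> x ->
  crossing_set V Vm x c ->
  (forall s, a <= s < c -> (V s - x) * (V a - x) > 0) ->
  (forall s, c <= s <= b -> (V s - x) * (V c - x) > 0) ->
  ind_ge x (V b) = ind_ge x (V a) + crossing_contribution c.
Proof.
  intros hac hcb hVc hc hleft hright.
  assert (hVmc : Vm c - x <> 0) by (destruct hc as [_ [h|[h|h]]]; lra).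
  assert (hVa := hleft a ltac:(lra)).
  assert (hVax : V a - x <> 0) by (intros e; rewrite e in hVa; lra).
  assert (hlim := left_limit_side V a c (Vm c) x (V a - x) ltac:(lra) (hVm c ltac:(lra)) hleft).
  assert ((Vm c - x) * (V a - x) <> 0) by (apply Rmult_integral_contrapositive; auto).
  unfold crossing_contribution.
  rewrite (indP_false (incr_through V x c)) by (intros [e _]; contradiction).
  rewrite (indP_false (decr_through V x c)) by (intros [e _]; cbv beta in e; lra).
  rewrite (ind_ge_same_side x (V b) (V c)) by (apply hright; lra).
  rewrite (ind_ge_same_side x (Vm c) (V a)) by lra.
  ring.
Qed.

Lemma single_crossing (a c b : R) : 0 <= a < c -> c <= b -> V a <> x -> V b <> x ->
  crossing_set V Vm x c -> (forall s, crossing_set V Vm x s -> a < s <= b -> s = c) ->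
  ind_ge x (V b) = ind_ge x (V a) + crossing_contribution c.
Proof.
  intros hac hcb hVa hVb hc hone.
  assert (hleft : forall s, a <= s < c -> (V s - x) * (V a - x) > 0).
  { intros s hs. apply (side_persists a s); [lra|exact hVa| |lra].
    intros s' hs' hs''. specialize (hone s' hs' ltac:(lra)). lra. }
  destruct (Req_dec (V c) x) as [hVc|hVc].
  - assert (hcb' : c < b) by (destruct (Req_dec c b) as [e|]; [subst; contradiction|lra]).
    apply (continuous_crossing a c b hac hcb' hVc hleft).
    intros s hs.
    assert (hVs : V s <> x).
    { intros e. assert (s = c) by (apply hone; [split; [lra|right; right; exact e]|lra]). lra. }
    rewrite Rmult_comm. apply (side_persists s b); [lra|exact hVs| |lra].
    intros s' hs' hs''. specialize (hone s' hs' ltac:(lra)). lra.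
  - apply (jump_crossing a c b hac hcb hVc hc hleft).
    intros s hs. apply (side_persists c b); [lra|exact hVc| |exact hs].
    intros s' hs' hs''. specialize (hone s' hs' ltac:(lra)). lra.
Qed.

Definition formula_upto (u : R) : Prop := exists L, NoDup L /\
  (forall s, In s L <-> crossing_set V Vm x s /\ s <= u) /\
  (V u <> x -> ind_ge x (V u) = ind_ge x (V 0) + sum_list crossing_contribution L).

Lemma formula_at_zero : formula_upto 0.
Proof.
  exists []. split; [constructor|split].
  - intros s; split; [intros []|intros [[hs _] hs']; lra].
  - intros _. simpl. lra.
Qed.

Lemma extend_formula (a c b : R) : 0 <= a < b -> V a <> x -> formula_upto a ->
  (forall s, crossing_set V Vm x s -> a < s <= b -> s = c) -> formula_upto b.
Proof.
  intros hab hVa [La [hnd [hmem hfa]]] hone.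
  destruct (classic (crossing_set V Vm x c /\ a < c <= b)) as [[hc hcb]|hnc].
  - exists (c :: La). split; [|split].
    + constructor; [|exact hnd]. intros hin; apply hmem in hin; lra.
    + intros s; split.
      * intros [<-|hin]; [split; [exact hc|lra]|]. apply hmem in hin; split; [tauto|lra].
      * intros [hs hsb]. destruct (Rle_or_lt s a); [right; apply hmem; auto|].
        left; symmetry; apply hone; auto; lra.
    + intros hVb. simpl.
      rewrite (single_crossing a c b), hfa by first [assumption | lra]. lra.
  - assert (hfree : forall s, crossing_set V Vm x s -> a < s <= b -> False).
    { intros s hs hsr. assert (s = c) by (apply hone; auto). subst s. tauto. }
    exists La. split; [exact hnd|split].
    + intros s; split.
      * intros hin; apply hmem in hin; split; [tauto|lra].
      * intros [hs hsb]. destruct (Rle_or_lt s a); [apply hmem; auto|].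
        exfalso; apply (hfree s hs); lra.
    + intros hVb. rewrite <- hfa by exact hVa.
      apply ind_ge_same_side, (side_persists a b); [lra|exact hVa|exact hfree|lra].
Qed.

Lemma formula_holds (t : R) : 0 <= t -> formula_upto t.
Proof.
  intros ht. refine (real_induction 0 t formula_upto ht _ _ t _); [| |lra].
  - intros m hm hbelow. destruct (Req_dec m 0) as [->|hm0]; [exact formula_at_zero|].
    destruct (crossing_window m) as [a [w [ha [hw [hVa [hlt hwin]]]]]]; [lra|].
    apply (extend_formula a m m); [lra|exact hVa|apply hbelow; lra|].
    intros s hs hsr. apply hwin; [exact hs|lra].
  - intros m hm hupto.
    destruct (crossing_window m) as [a [w [ha [hw [hVa [_ hwin]]]]]]; [lra|].
    exists w. split; [exact hw|]. intros u hu.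
    apply (extend_formula a m u); [lra|exact hVa|apply hupto; lra|].
    intros s hs hsr. apply hwin; [exact hs|lra].
Qed.

Lemma contribution_sum (L : list R) : sum_list crossing_contribution L =
  sum_list (fun s => indP (incr_through V x s)) L
  - sum_list (fun s => indP (decr_through V x s)) L
  + sum_list (fun s => ind_ge x (V s) - ind_ge x (Vm s)) L.
Proof.
  induction L as [|a L IH]; simpl; [lra|]. rewrite IH. unfold crossing_contribution. lra.
Qed.

Lemma through_times_list (t : R) (L : list R) (through : R -> Prop) :
  NoDup L -> (forall s, In s L <-> crossing_set V Vm x s /\ s <= t) ->
  (forall s, through s -> V s = x) ->
  exists l, NoDup l /\ (forall s, In s l <-> 0 < s <= t /\ through s) /\
    sum_list (fun s => indP (through s)) L = INR (length l).
Proof.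
  intros hnd hL hlevel.
  destruct (count_sublist through L hnd) as [l [hndl [hl hcount]]].
  exists l. split; [exact hndl|split; [|exact hcount]].
  intros s. rewrite hl, hL. split.
  - intros [[[hs _] hst] hth]. auto.
  - intros [hs hth]. split; [|exact hth]. split; [|lra]. split; [lra|]. right; right; auto.
Qed.

Lemma crossing_list_jumps (t : R) (L : list R) :
  (forall s, In s L <-> crossing_set V Vm x s /\ s <= t) ->
  (forall s, In s L -> 0 < s <= t) /\
  (forall s, 0 < s <= t -> ind_ge x (V s) - ind_ge x (Vm s) <> 0 -> In s L).
Proof.
  intros hL. split.
  - intros s hs. apply hL in hs. destruct hs as [[hs0 _] hst]. lra.
  - intros s hs hj. apply hL. split; [apply jump_is_crossing; [lra|exact hj]|lra].
Qed.

Lemma jump_sum_independent (t : R) (L lJ : list R) : NoDup L ->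
  (forall s, In s L <-> crossing_set V Vm x s /\ s <= t) -> NoDup lJ ->
  (forall s, In s lJ -> 0 < s <= t) ->
  (forall s, 0 < s <= t -> ind_ge x (V s) - ind_ge x (Vm s) <> 0 -> In s lJ) ->
  sum_list (fun s => ind_ge x (V s) - ind_ge x (Vm s)) L =
  sum_list (fun s => ind_ge x (V s) - ind_ge x (Vm s)) lJ.
Proof.
  intros hnd hL hndJ hJ hJc. destruct (crossing_list_jumps t L hL) as [hLt hLc].
  apply sum_list_same_support; [exact hnd|exact hndJ|].
  intros s hj. split; intros hin.
  - apply hJc; [apply hLt; exact hin|exact hj].
  - apply hLc; [apply hJ; exact hin|exact hj].
Qed.

End Crossings.

Theorem mainTheorem5 (V Vm : R -> R) (t x : R)
  (hV : cadlag V) (hfv : finite_variation V)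
  (hVm : forall s, 0 < s -> is_left_limit V s (Vm s))
  (ht : 0 < t) (hx : simple_level V Vm x)
  (hx0 : x <> V 0) (hxt : x <> V t) :
  exists lI lD : list R,
    NoDup lI /\ (forall s, In s lI <-> (0 < s <= t /\ incr_through V x s)) /\
    NoDup lD /\ (forall s, In s lD <-> (0 < s <= t /\ decr_through V x s)) /\
    let jump := fun s => ind_ge x (V s) - ind_ge x (Vm s) in
    (exists lJ : list R, NoDup lJ /\ (forall s, In s lJ -> 0 < s <= t) /\
       (forall s, 0 < s <= t -> jump s <> 0 -> In s lJ)) /\
    (forall lJ : list R, NoDup lJ -> (forall s, In s lJ -> 0 < s <= t) ->
       (forall s, 0 < s <= t -> jump s <> 0 -> In s lJ) ->
       ind_ge x (V t) =
         ind_ge x (V 0) + (INR (length lI) - INR (length lD))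
         + sum_list jump lJ).
Proof.
  destruct hV as [hrc _].
  destruct (formula_holds V Vm x hrc hVm hx hx0 t ltac:(lra)) as [L [hnd [hL hformula]]].
  destruct (through_times_list V Vm x t L (incr_through V x) hnd hL) as [lI [hndI [hI hcountI]]].
  { intros s [e _]. exact e. }
  destruct (through_times_list V Vm x t L (decr_through V x) hnd hL) as [lD [hndD [hD hcountD]]].
  { intros s [e _]. cbv beta in e. lra. }
  exists lI, lD. do 4 (split; [assumption|]). cbv zeta. split.
  - exists L. split; [exact hnd|]. exact (crossing_list_jumps V Vm x hx t L hL).
  - intros lJ hndJ hJ hJc.
    rewrite hformula, contribution_sum, hcountI, hcountD by (intros e; apply hxt; auto).
    rewrite (jump_sum_independent V Vm x hx t L lJ) by assumption.
    ring.
Qed.
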